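(* Let $f_\lambda$ be a probability density on $(0,\infty)$ with finite mean $\mu_\lambda$. Let $P_p$ be a probability distribution on $\{1,\dots,N\}$ with mean $E_p[n]=\sum_n n\,P_p(n)$, and for each $n$ let $g(\cdot\mid n)$ be a probability distribution on $\{0,1,\dots,N\}$ with mean $\overline{g}(n)=\sum_m m\,g(m\mid n)$. Consider random variables $(N_p,N_a,X,T)$ such that: $P\{N_p=n\}=\frac{n}{E_p[n]}P_p(n)$; conditionally on $N_p=n$, $N_a$ has distribution $g(\cdot\mid n)$; conditionally on $N_a=m$, $X$ is distributed as $\lambda_1+\dots+\lambda_m$ with $\lambda_1,\dots,\lambda_m$ i.i.d. with density $f_\lambda$ ($X=0$ if $m=0$); conditionally on $X=x$, $T$ is exponentially distributed with rate $x$ ($T=+\infty$ if $x=0$). Then, with the convention $1/0=+\infty$, $$E[T]\ \ge\ \frac{1}{\mu_\lambda\, E_p[n]}\; E_p\!\left[\frac{n}{\overline{g}(n)}\right],$$ where $E_p[h(n)]=\sum_n h(n)P_p(n)$.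
   Context: This models the content access delay $T$ of a random content request in an opportunistic network: $P_p(n)$ is the fraction of contents requested by exactly $n$ nodes (content popularity distribution), $g(m\mid n)$ is the probability that a content of popularity $n$ is held by $m$ nodes (availability given popularity), $f_\lambda$ is the distribution of pairwise contact rates (inter-contact times are exponential), and $X$ is the sum of the contact rates between the requester and the $N_a$ holders. *)

From HB Require Import structures.
From mathcomp Require Import all_boot all_order all_algebra.
From mathcomp Require Import all_classical all_reals all_analysis.
Set Implicit Arguments. Unset Strict Implicit. Unset Printing Implicit Defensive.
Import Order.TTheory GRing.Theory Num.Theory.
Import numFieldNormedType.Exports.
Local Open Scope classical_set_scope.
Local Open Scope ring_scope.

(* Mean of an exponential random variable T with rate x, computed from the
   library's exponential density; T = +oo (hence mean +oo) when the rate is 0. *)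
Definition exp_mean {R : realType} (x : R) : \bar R :=
  if 0 < x then (\int[@lebesgue_measure R]_(t in `[0%R, +oo[)
                   (t * exponential_pdf x t)%:E)%E
  else +oo%E.

(* iid_mean f h m s = E[ h (s + lambda_1 + ... + lambda_m) ] where the
   lambda_i are i.i.d. with density f on (0, +oo) (iterated integrals,
   i.e. integration against the m-fold product of the law f(x)dx). *)
Fixpoint iid_mean {R : realType} (f : R -> R) (h : R -> \bar R) (m : nat)
  (s : R) : \bar R :=
  match m with
  | 0%N => h s
  | m'.+1 => (\int[@lebesgue_measure R]_(l in `]0%R, +oo[)
                 ((f l)%:E * iid_mean f h m' (s + l)))%E
  end.

Definition Ep {R : realType} (N : nat) (Pp : nat -> R) : R :=
  \sum_(1 <= n < N.+1) n%:R * Pp n.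

(* gbar(n) = sum_{m=0}^N m g(m|n);  g m n stands for g(m | n). *)
Definition gbar {R : realType} (N : nat) (g : nat -> nat -> R) (n : nat) : R :=
  \sum_(0 <= m < N.+1) m%:R * g m n.

(* E[T] for the hierarchical model:
   P{N_p = n} = n P_p(n) / E_p[n],  N_a | N_p = n ~ g(. | n),
   X | N_a = m ~ lambda_1 + ... + lambda_m  (iid density f),
   T | X = x ~ Exp(x)   (T = +oo if x = 0). *)
Definition ET {R : realType} (N : nat) (f : R -> R) (Pp : nat -> R)
  (g : nat -> nat -> R) : \bar R :=
  (\sum_(1 <= n < N.+1) \sum_(0 <= m < N.+1)
     ((n%:R * Pp n / Ep N Pp) * g m n)%:E * iid_mean f exp_mean m 0)%E.

Definition ediv_inf {R : realType} (a b : R) : \bar R :=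
  if b == 0 then +oo%E else (a / b)%:E.

From HB Require Import structures.
From mathcomp Require Import all_boot all_order all_algebra.
From mathcomp Require Import all_classical all_reals all_analysis.
Import Order.TTheory GRing.Theory Num.Theory.
Import numFieldNormedType.Exports.
Local Open Scope classical_set_scope.
Local Open Scope ring_scope.
From mathcomp Require Import ring lra measurable_realfun.
Set Implicit Arguments. Unset Strict Implicit. Unset Printing Implicit Defensive.

(* Given N_a = m >= 1, the conditional mean of T is E[1 / X] with X a sum of m
   i.i.d. rates; the tangent line of y |-> 1 / y, integrated one rate at a time,
   gives E[1 / X] >= 1 / (m mu_l).  The same tangent-line bound for the law
   g(. | n) gives sum_m g(m | n) / m >= 1 / gbar(n) when g(0 | n) = 0, while
   g(0 | n) > 0 makes the conditional delay infinite.  Weighting by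
   n P_p(n) / E_p[n] and summing over n yields the bound. *)

Lemma inv_ge_tangent (R : realFieldType) (a y : R) : 0 < a -> 0 < y ->
  2 / a - y / a ^+ 2 <= y^-1.
Proof.
move=> a0 y0.
have -> : y^-1 = 2 / a - y / a ^+ 2 + (y - a) ^+ 2 / (y * a ^+ 2).
  by field; rewrite ?gt_eqF.
by rewrite lerDl divr_ge0 ?sqr_ge0// ltW// mulr_gt0// exprn_gt0.
Qed.

Lemma ediv_inf_ge0 (R : realType) (a b : R) : 0 <= a -> 0 <= b ->
  (0 <= ediv_inf a b)%E.
Proof. by move=> a0 b0; rewrite /ediv_inf; case: ifP => // _; rewrite lee_fin divr_ge0. Qed.

Lemma EFin_mul_ediv_inf (R : realType) (c a b : R) : 0 < c ->
  (c%:E * ediv_inf a b = ediv_inf (c * a) b)%E.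
Proof.
move=> c0; rewrite /ediv_inf; case: ifP => _; first by rewrite gt0_muley ?lte_fin.
by rewrite -EFinM mulrA.
Qed.

Lemma is_derive1_continuous (R : realType) (f : R -> R) (x d : R) :
  is_derive x 1 f d -> {for x, continuous f}.
Proof. by case=> df _; exact/differentiable_continuous/derivable1_diffP. Qed.

Section exponential_mean.
Variable R : realType.

Lemma is_derive_expRM (x t : R) :
  is_derive t 1 (fun t : R => expR (- x * t)) (expR (- x * t) * - x).
Proof.
apply: (@is_derive1_comp R expR (fun t => - x * t)).
have := @is_deriveZ R R R^o id (- x) t 1 1 (is_derive_id _ _).
by rewrite /GRing.scale/= mulr1.
Qed.

Let F (x t : R) := - ((t + x^-1) * expR (- x * t)).

Lemma is_derive_exp_mean_primitive (x t : R) : x != 0 ->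
  is_derive t 1 (F x) (t * (x * expR (- x * t))).
Proof.
move=> x0; have shift : is_derive t 1 (fun t : R => t + x^-1) 1.
  by have := is_deriveD (is_derive_id t 1) (is_derive_cst x^-1 t 1); rewrite addr0.
apply: is_derive_eq (is_deriveN (is_deriveM shift (is_derive_expRM x t))) _.
by rewrite /GRing.scale/=; field.
Qed.

Lemma cvgy_mulD_expRN (x c : R) : 0 < x -> 0 <= c ->
  (t + c) * expR (- x * t) @[t --> +oo] --> 0.
Proof.
move=> x0 c0.
have Vt : t^-1 @[t --> +oo] --> (0 : R).
  apply/(@gtr0_cvgV0 R R _ _ id); last exact: cvg_id.
  by near=> t; near: t; apply: nbhs_pinfty_gt; rewrite num_real.
have KVt : 4 / x ^+ 2 * t^-1 @[t --> +oo] --> (0 : R).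
  by rewrite -(mulr0 (4 / x ^+ 2)); apply: cvgM => //; exact: cvg_cst.
apply: (squeeze_cvgr _ (cvg_cst 0) KVt); near=> t.
have tc : c <= t by near: t; apply: nbhs_pinfty_ge; rewrite num_real.
have t0 : 0 < t by near: t; apply: nbhs_pinfty_gt; rewrite num_real.
(* [expR (x t) >= (x t)^2 / 2] makes the product [O(1/t)] *)
have := expR_ge1Dxn 1 (mulr_ge0 (ltW x0) (ltW t0)).
rewrite (_ : (2`!)%:R = 2 :> R)// mulNr expRN; set E := expR (x * t) => Eb.
have E0 : 0 < E by rewrite expR_gt0.
have key : (t + c) * (x ^+ 2 * t) <= 4 * E by nra.
apply/andP; split; first by apply: divr_ge0; [exact: addr_ge0 (ltW t0) c0 | exact: ltW].
rewrite ler_pdivrMr// (_ : _ * E = 4 * E / (x ^+ 2 * t)); last first.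
  by field; rewrite ?gt_eqF// ?exprn_gt0.
by rewrite ler_pdivlMr ?mulr_gt0 ?exprn_gt0.
Unshelve. all: by end_near.
Qed.

Lemma exp_mean_ge0 (x : R) : (0 <= exp_mean x)%E.
Proof.
rewrite /exp_mean; case: ifP => // x0; apply: integral_ge0 => t.
by rewrite /= in_itv/= andbT => t0; rewrite lee_fin mulr_ge0// exponential_pdf_ge0// ltW.
Qed.

Lemma exp_meanE (x : R) : 0 <= x -> exp_mean x = ediv_inf 1 x.
Proof.
rewrite le_eqVlt => /predU1P[<-|x0]; first by rewrite /exp_mean /ediv_inf ltxx eqxx.
rewrite /exp_mean x0 /ediv_inf gt_eqF// div1r.
under eq_integral => t.
  rewrite inE/= in_itv/= andbT => t0; rewrite exponential_pdfE//.
over.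
have dF t := @is_derive_exp_mean_primitive x t (lt0r_neq0 x0).
rewrite (@ge0_continuous_FTC2y R _ (F x) 0 0).
- by rewrite /F mulr0 expR0 mulr1 -EFinB opprK !add0r.
- by move=> t t0; apply: mulr_ge0 => //; apply: mulr_ge0; [exact: ltW | exact: expR_ge0].
- apply: continuous_subspaceT => t; apply: cvgM; first exact: cvg_id.
  apply: cvgM; first exact: cvg_cst.
  by have := is_derive1_continuous (is_derive_expRM x t).
- by rewrite -oppr0; apply: cvgN; apply: cvgy_mulD_expRN; rewrite ?invr_ge0 ?ltW.
- by move=> t _; have [] := dF t.
- exact/cvg_at_right_filter/(is_derive1_continuous (dF 0)).
- by move=> t _; rewrite derive1E; have [_ ->] := dF t.
Qed.

End exponential_mean.

Lemma lee_sum_nat (R : realType) (a b : nat) (F G : nat -> \bar R) :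
  (forall i, (a <= i < b)%N -> (F i <= G i)%E) ->
  (\sum_(a <= i < b) F i <= \sum_(a <= i < b) G i)%E.
Proof.
move=> FG; rewrite big_nat_cond [leRHS]big_nat_cond.
by apply: lee_sum => i /andP[+ _]; exact: FG.
Qed.

Lemma ge0_le_integral_nomeas d (T : measurableType d) (R : realType)
  (mu : {measure set T -> \bar R}) (D : set T) (f1 f2 : T -> \bar R) :
  (forall x, D x -> 0 <= f1 x)%E -> (forall x, D x -> f1 x <= f2 x)%E ->
  (\int[mu]_(x in D) f1 x <= \int[mu]_(x in D) f2 x)%E.
Proof.
(* no measurability is needed: the nonnegative integral is a supremum over
   simple functions below the integrand *)
move=> f1_ge0 f12.
have f2_ge0 x : D x -> (0 <= f2 x)%E by move=> Dx; exact: le_trans (f1_ge0 x Dx) (f12 x Dx).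
rewrite !ge0_integralE//; apply: ereal_sup_le => _ [h /= hf1 <-].
exists h => //= x; apply: le_trans (hf1 x) _.
by rewrite /patch; case: ifP => // /set_mem; exact: f12.
Qed.

Section iid_sum.
Variables (R : realType) (f : R -> R) (mu : R).
Local Notation I0oo := (`]0%R, +oo[%classic : set R).
Hypothesis mf : measurable_fun I0oo f.
Hypothesis f_ge0 : forall x, 0 < x -> 0 <= f x.
Hypothesis f_int1 : (\int[lebesgue_measure]_(x in I0oo) (f x)%:E = 1)%E.
Hypothesis f_mean : (\int[lebesgue_measure]_(x in I0oo) (x * f x)%:E = mu%:E)%E.

Let itv0y_gt0 (x : R) : I0oo x -> 0 < x.
Proof. by rewrite /= in_itv/= andbT. Qed.

Let measurable_shift (c : R) : measurable_fun I0oo (fun l => c + l).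
Proof. by apply: measurable_funD => //; exact: measurable_id. Qed.

Let measurable_shift_inv (c : R) : 0 <= c ->
  measurable_fun I0oo (fun l => (c + l)^-1).
Proof.
move=> c0; apply: open_continuous_measurable_fun; first exact: interval_open.
move=> l /[!inE] /itv0y_gt0 l0; apply: continuousV; first by rewrite gt_eqF// ltr_wpDl.
by apply: cvgD; [exact: cvg_cst | exact: cvg_id].
Qed.

Lemma integral_density_shift (c : R) : 0 <= c ->
  (\int[lebesgue_measure]_(l in I0oo) (f l * (c + l))%:E = (c + mu)%:E)%E.
Proof.
move=> c0.
under eq_integral do rewrite mulrDr EFinD (mulrC (f _) c) EFinM (mulrC (f _)).
rewrite ge0_integralD//; last 4 first.
- by move=> l /itv0y_gt0 l0; rewrite mule_ge0 ?lee_fin ?f_ge0.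
- by apply: measurable_funeM; exact/measurable_EFinP.
- by move=> l /itv0y_gt0 l0; rewrite lee_fin mulr_ge0 ?f_ge0 ?ltW.
- by apply/measurable_EFinP; apply: measurable_funM => //; exact: measurable_id.
rewrite ge0_integralZl_EFin//; first by rewrite f_int1 mule1 f_mean.
- by move=> l /itv0y_gt0 /f_ge0; rewrite lee_fin.
- exact/measurable_EFinP.
Qed.

Lemma integral_density_inv_shift_ge (c : R) : 0 < mu -> 0 <= c ->
  (((c + mu)^-1)%:E <= \int[lebesgue_measure]_(l in I0oo) (f l * (c + l)^-1)%:E)%E.
Proof.
move=> mu0 c0; set a := c + mu; have a0 : 0 < a by rewrite ltr_wpDl.
have f_ge0' l : I0oo l -> 0 <= f l by move/itv0y_gt0/f_ge0.
have shift_gt0 l : I0oo l -> 0 < c + l by move/itv0y_gt0; exact: ltr_wpDl.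
(* integrate the tangent line of [y |-> 1 / y] at [y = a] against [f] *)
have tangent : ((2 / a)%:E <= \int[lebesgue_measure]_(l in I0oo) (f l * (c + l)^-1)%:E
    + ((a ^+ 2)^-1)%:E * \int[lebesgue_measure]_(l in I0oo) (f l * (c + l))%:E)%E.
  rewrite -ge0_integralZl_EFin//; last 3 first.
  - by move=> l Il; rewrite lee_fin mulr_ge0 ?f_ge0' ?ltW ?shift_gt0.
  - by apply/measurable_EFinP; apply: measurable_funM => //; exact: measurable_shift.
  - by rewrite invr_ge0 exprn_ge0 ?ltW.
  rewrite -ge0_integralD//; last 4 first.
  - by move=> l Il; rewrite lee_fin mulr_ge0 ?f_ge0' ?invr_ge0 ?ltW ?shift_gt0.
  - by apply/measurable_EFinP; apply: measurable_funM => //; exact: measurable_shift_inv.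
  - move=> l Il; apply: mule_ge0; rewrite lee_fin; first by rewrite invr_ge0 exprn_ge0 ?ltW.
    by rewrite mulr_ge0 ?f_ge0' ?ltW ?shift_gt0.
  - apply: measurable_funeM; apply/measurable_EFinP.
    by apply: measurable_funM => //; exact: measurable_shift.
  rewrite -[(2 / a)%:E]mule1 -f_int1 -ge0_integralZl_EFin//; last 2 first.
  - exact/measurable_EFinP.
  - by rewrite divr_ge0 ?ltW.
  apply: ge0_le_integral_nomeas => l Il.
    by rewrite mule_ge0 ?lee_fin ?f_ge0'// divr_ge0 ?ltW.
  rewrite -!EFinM -EFinD lee_fin.
  have -> : f l / (c + l) + a ^- 2 * (f l * (c + l)) = f l * ((c + l)^-1 + (c + l) / a ^+ 2).
    by ring.
  rewrite mulrC ler_wpM2l ?f_ge0'// -lerBlDr.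
  exact: inv_ge_tangent (shift_gt0 l Il).
rewrite integral_density_shift// -/a -EFinM in tangent.
have -> : (a^-1)%:E = ((2 / a)%:E - ((a ^+ 2)^-1 * a)%:E)%E.
  by rewrite -EFinB; congr EFin; field; rewrite gt_eqF.
by rewrite leeBlDl// addeC.
Qed.

Lemma iid_mean_exp_ge0 (m : nat) (s : R) : (0 <= iid_mean f exp_mean m s)%E.
Proof.
elim: m s => [|m IH] s /=; first exact: exp_mean_ge0.
by apply: integral_ge0 => l /itv0y_gt0 l0; rewrite mule_ge0 ?lee_fin ?f_ge0.
Qed.

Lemma iid_mean_exp_ge (m : nat) (s : R) : 0 < mu -> 0 <= s ->
  (ediv_inf 1 (s + m%:R * mu) <= iid_mean f exp_mean m s)%E.
Proof.
move=> mu0; elim: m s => [|m IH] s s0 /=; first by rewrite mul0r addr0 exp_meanE.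
have sm0 : 0 <= s + m%:R * mu by rewrite addr_ge0// mulr_ge0// ltW.
rewrite /ediv_inf gt_eqF ?div1r; last by rewrite ltr_wpDl// mulr_gt0.
rewrite mulrSr mulrDl mul1r addrA.
apply: le_trans (integral_density_inv_shift_ge mu0 sm0) _.
apply: ge0_le_integral_nomeas => l /itv0y_gt0 l0; have sml := ltr_wpDl sm0 l0.
  by rewrite lee_fin mulr_ge0 ?f_ge0// invr_ge0 ltW.
rewrite EFinM; apply: lee_wpmul2l; first by rewrite lee_fin f_ge0.
apply: le_trans (IH (s + l) (addr_ge0 s0 (ltW l0))).
by rewrite /ediv_inf [s + l + _]addrAC gt_eqF ?div1r.
Qed.

End iid_sum.

Section availability.
Variables (R : realType) (N n : nat) (g : nat -> nat -> R).
Hypothesis g_ge0 : forall m, (m <= N)%N -> 0 <= g m n.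
Hypothesis g_sum1 : \sum_(0 <= m < N.+1) g m n = 1.

Lemma gbar_ge1 : g 0%N n = 0 -> 1 <= gbar N g n.
Proof.
move=> g00; rewrite -g_sum1 /gbar; apply: ler_sum_nat => -[|m] /andP[_ mN].
  by rewrite g00 mulr0.
by rewrite ler_peMl ?g_ge0// ler1n.
Qed.

(* [g m n / m%:R] is [0] at [m = 0], where [g 0 n] vanishes anyway *)
Lemma inv_gbar_le : g 0%N n = 0 ->
  (gbar N g n)^-1 <= \sum_(0 <= m < N.+1) g m n / m%:R.
Proof.
move=> g00; set G := gbar N g n; have G0 : 0 < G by apply: lt_le_trans (gbar_ge1 g00).
have -> : G^-1 = \sum_(0 <= m < N.+1) g m n * (2 / G - m%:R / G ^+ 2).
  rewrite (eq_bigr (fun m => 2 / G * g m n - m%:R * g m n / G ^+ 2)); last by move=> m _; ring.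
  rewrite sumrB -mulr_sumr -mulr_suml g_sum1 -/(gbar N g n) -/G.
  by field; rewrite gt_eqF.
apply: ler_sum_nat => -[|m] /andP[_ mN]; first by rewrite g00 !mul0r.
by rewrite ler_wpM2l ?g_ge0// inv_ge_tangent.
Qed.

Variables (mu : R) (I : nat -> \bar R).
Hypothesis mu_gt0 : 0 < mu.
Hypothesis I_ge : forall m, (m <= N)%N -> (ediv_inf 1 (m%:R * mu) <= I m)%E.

Let I_ge0 m : (m <= N)%N -> (0 <= I m)%E.
Proof.
move=> mN; apply: le_trans (I_ge mN); apply: ediv_inf_ge0 => //.
by apply: mulr_ge0 => //; exact: ltW.
Qed.

Let gI_ge0 m : (m < N.+1)%N -> (0 <= (g m n)%:E * I m)%E.
Proof. by rewrite ltnS => mN; rewrite mule_ge0 ?lee_fin ?g_ge0 ?I_ge0. Qed.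

Lemma ediv_inf_gbar_le :
  (ediv_inf mu^-1 (gbar N g n) <= \sum_(0 <= m < N.+1) (g m n)%:E * I m)%E.
Proof.
have S_ge0 k : (0 <= \sum_(k <= m < N.+1) (g m n)%:E * I m)%E.
  by rewrite big_nat_cond; apply: sume_ge0 => m /andP[/andP[_ /gI_ge0]].
have [g0_gt0|g0_le0] := ltP 0 (g 0%N n).
  have I0 : I 0%N = +oo%E by have := I_ge (leq0n N); rewrite mul0r /ediv_inf eqxx leye_eq => /eqP.
  by rewrite big_ltn// I0 gt0_muley ?lte_fin// addye ?leey// gt_eqF// (lt_le_trans _ (S_ge0 1%N)) ?ltNy0.
have g00 : g 0%N n = 0 by apply/eqP; rewrite eq_le g0_le0 g_ge0.
have G0 := lt_le_trans ltr01 (gbar_ge1 g00).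
rewrite /ediv_inf gt_eqF//.
apply: (@le_trans _ _ (\sum_(0 <= m < N.+1) (g m n / (m%:R * mu))%:E)%E).
  rewrite sumEFin lee_fin mulrC; under eq_bigr do rewrite invfM mulrA.
  by rewrite -mulr_suml ler_wpM2r ?inv_gbar_le// invr_ge0 ltW.
apply: lee_sum_nat => -[|m] /andP[_]; rewrite ltnS => mN; first by rewrite g00 !mul0r mul0e.
rewrite EFinM; apply: lee_wpmul2l; first by rewrite lee_fin g_ge0.
by have := I_ge mN; rewrite /ediv_inf gt_eqF ?div1r// mulr_gt0.
Qed.

Lemma weighted_ediv_inf_gbar_le (w : R) : 0 <= w ->
  (w%:E * ediv_inf mu^-1 (gbar N g n) <= \sum_(0 <= m < N.+1) (w * g m n)%:E * I m)%E.
Proof.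
move=> w0; have -> : (\sum_(0 <= m < N.+1) (w * g m n)%:E * I m
    = w%:E * \sum_(0 <= m < N.+1) (g m n)%:E * I m)%E.
  rewrite big_nat_cond [in RHS]big_nat_cond ge0_sume_distrr.
    by apply: eq_bigr => m _; rewrite EFinM muleA.
  by move=> m /andP[/andP[_ /gI_ge0]].
by rewrite lee_wpmul2l ?lee_fin// ediv_inf_gbar_le.
Qed.

End availability.

Lemma ediv_inf_reweight (R : realType) (mu E p : R) (n : nat) (G : R) :
  0 < mu -> 0 < E -> (0 < n)%N -> 0 <= p ->
  (((mu * E)^-1)%:E * (p%:E * ediv_inf n%:R G)
   = (n%:R * p / E)%:E * ediv_inf mu^-1 G)%E.
Proof.
move=> mu0 E0 n0; rewrite le_eqVlt => /predU1P[<-|p0]; first by rewrite mulr0 mul0r !mul0e mule0.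
have c0 : 0 < (mu * E)^-1 by rewrite invr_gt0 mulr_gt0.
have w0 : 0 < n%:R * p / E by rewrite divr_gt0// mulr_gt0// ltr0n.
rewrite !EFin_mul_ediv_inf//.
by congr ediv_inf; rewrite invfM; ring.
Qed.

Lemma Ep_gt0 (R : realType) (N : nat) (Pp : nat -> R) :
  (forall n, (1 <= n <= N)%N -> 0 <= Pp n) -> \sum_(1 <= n < N.+1) Pp n = 1 ->
  0 < Ep N Pp.
Proof.
move=> Pp_ge0 Pp_sum1; apply: lt_le_trans ltr01 _; rewrite -Pp_sum1.
by apply: ler_sum_nat => n nN; rewrite ler_peMl ?Pp_ge0// ler1n; case/andP: nN.
Qed.

Theorem theorem1 (R : realType) (N : nat) (f : R -> R) (mu_l : R)
  (Pp : nat -> R) (g : nat -> nat -> R) :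
  (* f is a probability density on (0, +oo) with finite mean mu_l *)
  measurable_fun (`]0%R, +oo[ : set R) f ->
  (forall x, 0 < x -> 0 <= f x) ->
  (\int[@lebesgue_measure R]_(x in `]0%R, +oo[) (f x)%:E = 1)%E ->
  (\int[@lebesgue_measure R]_(x in `]0%R, +oo[) (x * f x)%:E = mu_l%:E)%E ->
  (* P_p is a probability distribution on {1, ..., N} *)
  (forall n, (1 <= n <= N)%N -> 0 <= Pp n) ->
  \sum_(1 <= n < N.+1) Pp n = 1 ->
  (* each g(. | n) is a probability distribution on {0, ..., N} *)
  (forall n m, (1 <= n <= N)%N -> (m <= N)%N -> 0 <= g m n) ->
  (forall n, (1 <= n <= N)%N -> \sum_(0 <= m < N.+1) g m n = 1) ->
  (ET N f Pp g >=
     ((mu_l * Ep N Pp)^-1)%:E *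
     \sum_(1 <= n < N.+1) (Pp n)%:E * ediv_inf n%:R (gbar N g n))%E.
Proof.
move=> mf f_ge0 f_int1 f_mean Pp_ge0 Pp_sum1 g_ge0 g_sum1.
have Ep0 := Ep_gt0 Pp_ge0 Pp_sum1.
have w_ge0 n : (1 <= n <= N)%N -> 0 <= n%:R * Pp n / Ep N Pp.
  by move=> nN; rewrite divr_ge0 ?mulr_ge0 ?ler0n ?Pp_ge0// ltW.
have mu_ge0 : 0 <= mu_l.
  rewrite -lee_fin -f_mean; apply: integral_ge0 => x; rewrite /= in_itv/= andbT => x0.
  by rewrite lee_fin mulr_ge0 ?f_ge0 ?ltW.
(* the bound is vacuous for [mu_l = 0], where [0^-1 = 0] *)
have [mu00|mu0] := eqVneq mu_l 0.
  rewrite mu00 mul0r invr0 mul0e /ET big_nat_cond; apply: sume_ge0 => n /andP[nN _].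
  rewrite big_nat_cond; apply: sume_ge0 => m /andP[/andP[_ mN] _].
  by rewrite mule_ge0 ?iid_mean_exp_ge0// lee_fin mulr_ge0 ?w_ge0 ?g_ge0// -ltnS.
have {mu0 mu_ge0}mu0 : 0 < mu_l by rewrite lt_def mu0.
rewrite /ET big_nat_cond ge0_sume_distrr; last first.
  move=> n /andP[nN _]; rewrite mule_ge0 ?lee_fin ?Pp_ge0// ediv_inf_ge0//.
  rewrite /gbar big_nat_cond sumr_ge0// => m /andP[/andP[_ mN] _].
  by rewrite mulr_ge0 ?g_ge0// -ltnS.
rewrite [leRHS]big_nat_cond; apply: lee_sum => n /andP[/andP[n1 nN] _].
have n_range : (1 <= n <= N)%N by rewrite n1.
rewrite ediv_inf_reweight ?Pp_ge0//.
apply: (weighted_ediv_inf_gbar_le (g_ge0 n ^~ n_range) (g_sum1 n n_range) mu0 _ (w_ge0 n n_range)).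
by move=> m _; have := iid_mean_exp_ge mf f_ge0 f_int1 f_mean m mu0 (lexx 0); rewrite add0r.
Qed.
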